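(* Let $(\mathbf f,\mathbf g),(\mathbf f',\mathbf g'),(\mathbf f^*,\mathbf g^* )$ be models with $(\mathbf f,\mathbf g)\sim_L(\mathbf f^*,\mathbf g^* )$. Fix labels $y_1,\dots,y_M\in\mathcal Y$ and inputs $x_1,\dots,x_M\in\mathcal X$, and let $\mathbf L,\mathbf L^*,\mathbf L'$ be the matrices with columns $\mathbf g_0(y_i)$, $\mathbf g^*_0(y_i)$, $\mathbf g'_0(y_i)$ ($i=1,\dots,M$) and $\mathbf N,\mathbf N^*,\mathbf N'$ the matrices with columns $\mathbf f_0(x_i)$, $\mathbf f^*_0(x_i)$, $\mathbf f'_0(x_i)$. With $x\sim p_{\mathcal D}$ and $y$ uniform on $\mathcal Y$, and assuming the quantities below are defined (all components of finite positive variance), $$d_{\mathrm{SVD}}(\mathbf L^\top\mathbf f(x),\mathbf L'^\top\mathbf f'(x))=d_{\mathrm{SVD}}(\mathbf L^{*\top}\mathbf f^*(x),\mathbf L'^\top\mathbf f'(x)),$$ $$d_{\mathrm{SVD}}(\mathbf N^\top\mathbf g(y),\mathbf N'^\top\mathbf g'(y))=d_{\mathrm{SVD}}(\mathbf N^{*\top}\mathbf g^*(y),\mathbf N'^\top\mathbf g'(y)).$$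
   Context: Let $\mathcal X$ be a set of inputs and $\mathcal Y$ a finite set of labels; fix $M\ge1$ and a probability distribution $p_{\mathcal D}$ on $\mathcal X$. A model is a pair $(\mathbf f,\mathbf g)$ of functions $\mathbf f:\mathcal X\to\mathbb R^M$, $\mathbf g:\mathcal Y\to\mathbb R^M$ defining $p_{\mathbf f,\mathbf g}(y\mid x)=\exp(\mathbf f(x)^\top\mathbf g(y))/\sum_{y'\in\mathcal Y}\exp(\mathbf f(x)^\top\mathbf g(y'))$. With pivot input $x_0$ and pivot label $y_0$, write $\mathbf f_0(x)=\mathbf f(x)-\mathbf f(x_0)$, $\mathbf g_0(y)=\mathbf g(y)-\mathbf g(y_0)$ (similarly for other models). The relation $(\mathbf f,\mathbf g)\sim_L(\mathbf f^*,\mathbf g^* )$ holds iff there is an invertible $\mathbf A\in\mathbb R^{M\times M}$ with $\mathbf f(x)=\mathbf A\mathbf f^*(x)$ for all $x$ and $\mathbf g_0(y)=\mathbf A^{-\top}\mathbf g^*_0(y)$ for all $y$. For $M$-dimensional random vectors $\mathbf z,\mathbf w$ (jointly distributed, components with finite positive variance), let $\mathbf z',\mathbf w'$ be the standardized vectors $z'_i=(z_i-\mathbb E[z_i])/\operatorname{std}(z_i)$, $w'_i=(w_i-\mathbb E[w_i])/\operatorname{std}(w_i)$, and let $\boldsymbol\Sigma_{\mathbf z'\mathbf w'}$ be the cross-covariance matrix with entries $\mathrm{Cov}[z'_i,w'_j]$. Let $\{\mathbf u_i\}_{i=1}^M$, $\{\mathbf v_i\}_{i=1}^M$ be the left and right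 singular vectors of $\boldsymbol\Sigma_{\mathbf z'\mathbf w'}$. Define $m_{\mathrm{SVD}}(\mathbf z,\mathbf w)=\frac1M\sum_{i=1}^M\mathrm{Cov}[\mathbf u_i^\top\mathbf z',\mathbf v_i^\top\mathbf w']$ (equivalently, $\frac1M$ times the sum of the singular values of $\boldsymbol\Sigma_{\mathbf z'\mathbf w'}$) and $d_{\mathrm{SVD}}(\mathbf z,\mathbf w)=1-m_{\mathrm{SVD}}(\mathbf z,\mathbf w)$. *)

From HB Require Import structures.
From mathcomp Require Import all_boot all_order all_algebra.
From mathcomp Require Import all_classical all_reals all_analysis.
Set Implicit Arguments. Unset Strict Implicit. Unset Printing Implicit Defensive.
Import Order.TTheory GRing.Theory Num.Theory.
Local Open Scope ring_scope.
Local Open Scope classical_set_scope.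

Section Defs.
Variable R : realType.

Definition pivot {T : Type} {M : nat} (f : T -> 'cV[R]_M) (t0 : T) : T -> 'cV[R]_M :=
  fun t => f t - f t0.

Definition simL {X Y : Type} {M : nat} (x0 : X) (y0 : Y)
  (f : X -> 'cV[R]_M) (g : Y -> 'cV[R]_M)
  (fs : X -> 'cV[R]_M) (gs : Y -> 'cV[R]_M) : Prop :=
  exists A : 'M[R]_M, A \in unitmx /\
    (forall x, f x = A *m fs x) /\
    (forall y, pivot g y0 y = (invmx A)^T *m pivot gs y0 y).

Definition colmat {T : Type} {M : nat} (h : T -> 'cV[R]_M) (s : 'I_M -> T) : 'M[R]_M :=
  \matrix_(a < M, i < M) h (s i) a 0.

Definition is_svd {M : nat} (A U V : 'M[R]_M) (s : 'rV[R]_M) : Prop :=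
  U^T *m U = 1%:M /\ V^T *m V = 1%:M /\ (forall i, 0 <= s 0 i) /\
  A = U *m diag_mx s *m V^T.

Definition singular_values {M : nat} (A : 'M[R]_M) : 'rV[R]_M :=
  xget 0 [set s | exists U V, is_svd A U V s].

Definition sv_sum {M : nat} (A : 'M[R]_M) : R := \sum_i singular_values A 0 i.

Definition covE {T : Type} (E : (T -> R) -> R) (u v : T -> R) : R :=
  E (fun t => (u t - E u) * (v t - E v)).

Definition stdE {T : Type} (E : (T -> R) -> R) (u : T -> R) : R :=
  Num.sqrt (covE E u u).

Definition comp {T : Type} {M : nat} (z : T -> 'cV[R]_M) (i : 'I_M) : T -> R :=
  fun t => z t i 0.

Definition standardize {T : Type} (E : (T -> R) -> R) (u : T -> R) : T -> R :=
  fun t => (u t - E u) / stdE E u.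

Definition crosscov {T : Type} {M : nat} (E : (T -> R) -> R)
  (z w : T -> 'cV[R]_M) : 'M[R]_M :=
  \matrix_(i < M, j < M)
     covE E (standardize E (comp z i)) (standardize E (comp w j)).

Definition m_SVD {T : Type} {M : nat} (E : (T -> R) -> R) (z w : T -> 'cV[R]_M) : R :=
  (M%:R)^-1 * sv_sum (crosscov E z w).

Definition d_SVD {T : Type} {M : nat} (E : (T -> R) -> R) (z w : T -> 'cV[R]_M) : R :=
  1 - m_SVD E z w.

Definition expP {d} {X : measurableType d} (P : probability X R) (h : X -> R) : R :=
  fine ('E_P[h])%E.

Definition expU (Y : finType) (h : Y -> R) : R :=
  (#|Y|%:R)^-1 * \sum_(y : Y) h y.

Definition finite_pos_var_P {d} {X : measurableType d} (P : probability X R) {M : nat}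
  (z : X -> 'cV[R]_M) : Prop :=
  forall i : 'I_M,
    P.-integrable setT (fun x => (comp z i x)%:E) /\
    P.-integrable setT (fun x => ((comp z i x) ^+ 2)%:E) /\
    0 < covE (expP P) (comp z i) (comp z i).

Definition pos_var_U (Y : finType) {M : nat} (z : Y -> 'cV[R]_M) : Prop :=
  forall i : 'I_M, 0 < covE (@expU Y) (comp z i) (comp z i).

End Defs.

(** Write [f = A f*] and [g_0 = A^-T g*_0]. The label matrices then
    satisfy [L = A^-T L*], so [L^T f = L*^T A^-1 A f* = L*^T f*]: the first pair of
    random vectors is literally the same. The input matrices satisfy [N = A N*],
    so [N^T g(y) = N*^T A^T (A^-T g*_0(y) + g(y0)) = N*^T g*(y) + c] for a constant
    vector [c]; standardization removes constant shifts, hence the cross-covariance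
    matrices, and with them [d_SVD], coincide. *)
From Pilot Require Import Defs.
From HB Require Import structures.
From mathcomp Require Import all_boot all_order all_algebra.
From mathcomp Require Import all_classical all_reals all_analysis.
Set Implicit Arguments. Unset Strict Implicit. Unset Printing Implicit Defensive.
Import Order.TTheory GRing.Theory Num.Theory.
Local Open Scope ring_scope.

Section ShiftInvariance.
Variables (R : realType) (T : Type) (E : (T -> R) -> R).
Hypothesis E_shift : forall (u : T -> R) (c : R), E (fun t => u t + c) = E u + c.

Lemma center_shift (u : T -> R) (c : R) (t : T) :
  u t + c - E (fun s => u s + c) = u t - E u.
Proof. by rewrite E_shift opprD addrACA subrr addr0. Qed.

Lemma standardize_shift (u : T -> R) (c : R) :
  standardize E (fun t => u t + c) = standardize E u.
Proof.
have cov_eq : covE E (fun t => u t + c) (fun t => u t + c) = covE E u u.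
  by rewrite /covE; congr E; apply: funext => t; rewrite center_shift.
by apply: funext => t; rewrite /standardize /stdE cov_eq center_shift.
Qed.

Lemma d_SVD_shiftl (M : nat) (z w : T -> 'cV[R]_M) (c : 'cV[R]_M) :
  d_SVD E (fun t => z t + c) w = d_SVD E z w.
Proof.
rewrite /d_SVD /m_SVD.
have -> : crosscov E (fun t => z t + c) w = crosscov E z w.
  apply/matrixP => i j; rewrite !mxE; congr covE.
  rewrite -[RHS](standardize_shift _ (c i 0)); congr (standardize E _).
  by apply: funext => t; rewrite /Defs.comp mxE.
by [].
Qed.

End ShiftInvariance.

Lemma expU_shift (R : realType) (Y : finType) (y0 : Y) (u : Y -> R) (c : R) :
  expU (fun y => u y + c) = expU u + c.
Proof.
have Y_gt0 : (0 < #|Y|)%N by apply/card_gt0P; exists y0.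
rewrite /expU big_split /= sumr_const mulrDr -[c *+ _]mulr_natl mulrA.
by rewrite (_ : #|xpredT| = #|Y|) // mulVf ?mul1r // pnatr_eq0 -lt0n.
Qed.

Lemma colmat_mulmx (R : realType) (T : Type) (M : nat) (B : 'M[R]_M)
    (h k : T -> 'cV[R]_M) (s : 'I_M -> T) :
  (forall t, h t = B *m k t) -> colmat h s = B *m colmat k s.
Proof.
move=> hk; apply/matrixP => a i; rewrite !mxE hk mxE.
by apply: eq_bigr => j _; rewrite mxE.
Qed.

Lemma pivot_mulmx (R : realType) (T : Type) (M : nat) (B : 'M[R]_M)
    (h k : T -> 'cV[R]_M) (t0 t : T) :
  (forall t, h t = B *m k t) -> pivot h t0 t = B *m pivot k t0 t.
Proof. by move=> hk; rewrite /pivot !hk mulmxBr. Qed.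

Theorem mainTheorem11 (R : realType) (M : nat) (hM : (0 < M)%N)
  (d : measure_display) (X : measurableType d) (P : probability X R)
  (Y : finType) (x0 : X) (y0 : Y)
  (f f' fs : X -> 'cV[R]_M) (g g' gs : Y -> 'cV[R]_M)
  (hL : simL x0 y0 f g fs gs)
  (ys : 'I_M -> Y) (xs : 'I_M -> X) :
  let L  := colmat (pivot g y0) ys in
  let Ls := colmat (pivot gs y0) ys in
  let L' := colmat (pivot g' y0) ys in
  let N  := colmat (pivot f x0) xs in
  let Ns := colmat (pivot fs x0) xs in
  let N' := colmat (pivot f' x0) xs in
  let zL  := fun x => L^T *m f x in
  let zLs := fun x => Ls^T *m fs x in
  let zL' := fun x => L'^T *m f' x in
  let wN  := fun y => N^T *m g y in
  let wNs := fun y => Ns^T *m gs y in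
  let wN' := fun y => N'^T *m g' y in
  finite_pos_var_P P zL -> finite_pos_var_P P zLs -> finite_pos_var_P P zL' ->
  pos_var_U wN -> pos_var_U wNs -> pos_var_U wN' ->
  d_SVD (expP P) zL zL' = d_SVD (expP P) zLs zL' /\
  d_SVD (@expU R Y) wN wN' = d_SVD (@expU R Y) wNs wN'.
Proof.
move=> L Ls L' N Ns N' zL zLs zL' wN wNs wN' _ _ _ _ _ _.
case: hL => A [A_unit [hf hg]].
have EL : L = (invmx A)^T *m Ls by apply: colmat_mulmx.
have EN : N = A *m Ns by apply: colmat_mulmx => x; apply: pivot_mulmx.
have AtAinvt : A^T *m (invmx A)^T = 1%:M by rewrite -trmx_mul mulVmx // trmx1.
have -> : zL = zLs.
  apply: funext => x; rewrite /zL /zLs EL hf trmx_mul trmxK -mulmxA.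
  by rewrite (mulmxA (invmx A)) mulVmx // mul1mx.
have -> : wN = fun y => wNs y + Ns^T *m (A^T *m g y0 - gs y0).
  apply: funext => y; rewrite /wN /wNs EN trmx_mul -mulmxDr -mulmxA.
  congr (_ *m _); rewrite -[g y](subrK (g y0)) -/(pivot g y0 y) hg.
  by rewrite mulmxDr mulmxA AtAinvt mul1mx /pivot addrAC -addrA.
by split=> //; apply: d_SVD_shiftl; exact: expU_shift y0.
Qed.
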